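(* Let $k\ge2$, $d=4\cdot3^{k-1}$, and let $p:\Psi^k\to\{1,\dots,d\}$ be any bijection. For each group-theoretical relation $(\gamma,\psi)$ of level $k$ define $h_{\gamma,\psi}:\Delta^{d-1}\to\mathbb{R}$ by $$h_{\gamma,\psi}(x)=\sigma\Bigl(\sum_{\psi'\in S(\gamma,\psi)}x_{p(\psi')}\Bigr)\,\sigma\bigl(x_{p(\psi)}\bigr),$$ and let $G^k(x)=\max h_{\gamma,\psi}(x)$, the maximum over all group-theoretical relations $(\gamma,\psi)$ of level $k$. Then $\inf_{x\in\Delta^{d-1}}G^k(x)=12\cdot3^{k-1}-3$.
   Context: $\Gamma$ is the free group on $\xi,\eta$; $|w|$ denotes reduced word length; $\Psi^k$ is the set of reduced words of length exactly $k$ (so $|\Psi^k|=4\cdot3^{k-1}$). $\Delta^{d-1}=\{x\in\mathbb{R}^d: x_i>0,\ \sum_i x_i=1\}$ and $\sigma(t)=(1-t)/t$ for $t\in(0,1)$. A group-theoretical relation of level $k$ is a pair $(\gamma,\psi)$ with $\gamma\in\Gamma\setminus\{1\}$, $|\gamma|\le k$, $\psi\in\Psi^k$, and $|\gamma\psi|\le k$. For such a pair, $S(\gamma,\psi)\subset\Psi^k$ is: if $\gamma\psi=1$, the set of words in $\Psi^k$ whose first letter equals the first letter of the reduced word $\gamma$; if $\gamma\psi\ne1$, the set of words in $\Psi^k$ that do not have the reduced word $\gamma\psi$ as an initial subword. (In all cases $S(\gamma,\psi)$ is a nonempty proper subset of $\Psi^k$, so $h_{\gamma,\psi}$ is well defined.)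 *)

From Stdlib Require Import Reals.
From mathcomp Require Import all_boot.
Set Implicit Arguments. Unset Strict Implicit. Unset Printing Implicit Defensive.

(* Letters of the free group on xi, eta: (g, s) with g = false for xi,
   g = true for eta, and s = false for exponent +1, s = true for exponent -1. *)
Definition letter := (bool * bool)%type.
Definition xi : letter := (false, false).
Definition eta : letter := (true, false).
Definition inv_letter (a : letter) : letter := (a.1, ~~ a.2).

Definition word := seq letter.

Definition reduced (w : word) : bool :=
  if w is a :: t then path (fun a b => b != inv_letter a) a t else true.

Definition red (w : word) : word :=
  foldr (fun a s => if s is b :: t then (if b == inv_letter a then t else a :: s)
                    else [:: a]) [::] w.

(* Product in Gamma of (reduced words representing) group elements. *)
Definition gmul (u v : word) : word := red (u ++ v).

Fixpoint all_words (n : nat) : seq word :=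
  if n is n'.+1 then [seq a :: w | a <- [:: (false, false); (false, true); (true, false); (true, true)], w <- all_words n']
  else [:: [::]].

Definition Psi (k : nat) : seq word := [seq w <- all_words k | reduced w].

Definition ball (k : nat) : seq word :=
  [seq w <- flatten [seq all_words n | n <- iota 0 k.+1] | reduced w].

Definition relations (k : nat) : seq (word * word) :=
  [seq gp <- [seq (g, s) | g <- ball k, s <- Psi k]
     | (gp.1 != [::]) && (size (gmul gp.1 gp.2) <= k)%N].

Definition Sset (k : nat) (g s : word) : seq word :=
  if gmul g s == [::] then [seq w <- Psi k | take 1 w == take 1 g]
  else [seq w <- Psi k | ~~ prefix (gmul g s) w].

Open Scope R_scope.

Definition sigma (t : R) : R := (1 - t) / t.

(* The open simplex Delta^{d-1}, coordinates indexed by 'I_d (i.e. 0..d-1). *)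
Definition in_simplex (d : nat) (x : 'I_d -> R) : Prop :=
  (forall i, 0 < x i) /\ \big[Rplus/0]_(i < d) x i = 1.

Definition hfun (k d : nat) (p : word -> 'I_d) (g s : word) (x : 'I_d -> R) : R :=
  sigma (\big[Rplus/0]_(w <- Sset k g s) x (p w)) * sigma (x (p s)).

(* Maximum of a finite nonempty list of reals (0 for the empty list). *)
Definition list_max (l : seq R) : R :=
  if l is a :: t then foldr Rmax a t else 0.

Definition Gk (k d : nat) (p : word -> 'I_d) (x : 'I_d -> R) : R :=
  list_max [seq hfun k p gp.1 gp.2 x | gp <- relations k].

Definition is_inf (E : R -> Prop) (m : R) : Prop :=
  (forall y, E y -> m <= y) /\
  (forall m', (forall y, E y -> m' <= y) -> m' <= m).

From Pilot Require Import Defs.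
From Stdlib Require Import Reals Lra Psatz.
From HB Require Import structures.
From mathcomp Require Import all_boot zify.

(* The infimum is attained at the barycentre: there every [S(gamma, psi)] has
   at least [3^(k-1)] of the [d = 4 * 3^(k-1)] words, so every [h] is at most
   [3 * (d - 1)].  Conversely, if [G^k(x) < 12 * 3^(k-1) - 3] then for every
   [psi] the relation [(psi^-1, psi)] forces [x_psi] strictly above the tangent
   line of the level curve [sigma(a) sigma(y) = 12 * 3^(k-1) - 3] at the
   barycentre, evaluated at [a = x(S(psi^-1, psi))].  Each word lies in exactly
   [3^(k-1)] of the sets [S(psi^-1, psi)], so summing these strict inequalities
   over [psi] gives [1 < 1]. *)

HB.instance Definition _ :=
  Monoid.isComLaw.Build R 0 Rplus
    (fun a b c => esym (Rplus_assoc a b c)) Rplus_comm Rplus_0_l.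

Section Words.
Local Open Scope nat_scope.

Lemma all_words_S n : all_words n.+1 =
  [seq (false, false) :: w | w <- all_words n] ++ [seq (false, true) :: w | w <- all_words n] ++
  [seq (true, false) :: w | w <- all_words n] ++ [seq (true, true) :: w | w <- all_words n].
Proof. by rewrite /= cats0. Qed.

Lemma mem_all_words n w : (w \in all_words n) = (size w == n).
Proof.
elim: n w => [|n IH] [|a w] //; rewrite all_words_S !mem_cat.
  by apply/negP; case/or4P => /mapP [].
have mem_cons c b v : (c :: v \in [seq b :: u | u <- all_words n]) = (c == b) && (size v == n).
  apply/mapP/andP => [[u u_in [-> ->]]|[/eqP -> v_n]]; first by rewrite eqxx -IH.
  by exists v; rewrite ?IH.
by rewrite !mem_cons eqSS; case: a => [[] []]; rewrite /= ?orbF.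
Qed.

Lemma uniq_all_words n : uniq (all_words n).
Proof.
elim: n => [//|n IH]; apply: allpairs_uniq => //.
by move=> [a u] [b v] _ _ /= [-> ->].
Qed.

Lemma mem_Psi k w : (w \in Psi k) = reduced w && (size w == k).
Proof. by rewrite mem_filter mem_all_words. Qed.

Lemma uniq_Psi k : uniq (Psi k).
Proof. exact/filter_uniq/uniq_all_words. Qed.

Lemma count_reduced_cons n b : count (fun w => reduced (b :: w)) (all_words n) = 3 ^ n.
Proof.
elim: n b => [|n IH] b //.
rewrite all_words_S !count_cat !count_map expnS.
by case: b => [[] []] /=; rewrite ?count_pred0 !IH; lia.
Qed.

Lemma size_Psi k : size (Psi k.+1) = 4 * 3 ^ k.
Proof.
rewrite size_filter all_words_S !count_cat !count_map.
by rewrite /preim !count_reduced_cons; lia.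
Qed.

Lemma count_Psi_head k b : count (fun w => take 1 w == [:: b]) (Psi k.+1) = 3 ^ k.
Proof.
rewrite count_filter all_words_S !count_cat !count_map.
case: b => [[] []]; rewrite /preim /predI /= ?count_pred0 ?addn0 ?add0n.
all: apply: etrans (count_reduced_cons k _); apply: eq_count => w /=.
all: by rewrite take0 eqxx.
Qed.

Definition winv (w : word) : word := rev (map inv_letter w).

Lemma inv_letterK : involutive inv_letter.
Proof. by case=> ? []. Qed.

Lemma winvK : involutive winv.
Proof.
move=> w; rewrite /winv map_rev revK -map_comp map_id_in // => a _.
exact: inv_letterK.
Qed.

Lemma size_winv w : size (winv w) = size w.
Proof. by rewrite size_rev size_map. Qed.

Lemma reduced_winv w : reduced (winv w) = reduced w.
Proof.
suff imp v : reduced v -> reduced (winv v) by apply/idP/idP => /imp; rewrite ?winvK.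
have sortedE u : reduced u = sorted (fun a b => b != inv_letter a) u by case: u.
rewrite !sortedE /winv rev_sorted sorted_map.
by apply: sub_sorted => a b /=; rewrite inv_letterK eq_sym.
Qed.

Lemma perm_winv_Psi k : perm_eq (map winv (Psi k)) (Psi k).
Proof.
apply: uniq_perm; rewrite ?(map_inj_uniq (can_inj winvK)) ?uniq_Psi // => w.
by rewrite -{1}[w]winvK (mem_map (can_inj winvK)) !mem_Psi reduced_winv size_winv.
Qed.

Lemma count_Psi_winv_head k b :
  count (fun w => take 1 (winv w) == [:: b]) (Psi k.+1) = 3 ^ k.
Proof.
by rewrite -(count_Psi_head k b) -[RHS](permP (perm_winv_Psi _)) count_map.
Qed.

Definition red_step (a : letter) (s : word) : word :=
  if s is b :: t then (if b == inv_letter a then t else a :: s) else [:: a].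

Lemma red_cat u v : red (u ++ v) = foldr red_step (red v) u.
Proof. exact: foldr_cat. Qed.

Lemma red_reduced w : reduced w -> red w = w.
Proof.
elim: w => [//|a t IH] red_at.
have red_t : reduced t by case: t red_at {IH} => //= b t /andP [].
rewrite -cat1s red_cat IH //=.
by case: t red_at {IH red_t} => //= b t /andP [/negbTE ->].
Qed.

Lemma gmul_winv w : reduced w -> gmul (winv w) w = [::].
Proof.
move=> red_w; rewrite /gmul red_cat red_reduced //.
elim: w {red_w} => [//|b t IH].
by rewrite /winv /= rev_cons -cats1 foldr_cat /= inv_letterK eqxx.
Qed.

Lemma winv_relation k w : 0 < k -> w \in Psi k -> (winv w, w) \in relations k.
Proof.
move=> k_gt0 w_in; have := w_in; rewrite mem_Psi => /andP [red_w /eqP size_w].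
rewrite mem_filter [_.1]/= [_.2]/= gmul_winv // andbT -size_eq0 size_winv size_w -lt0n k_gt0.
apply/allpairsP; exists (winv w, w); split => //.
rewrite mem_filter reduced_winv red_w; apply/flattenP; exists (all_words k).
  by apply/mapP; exists k; rewrite // mem_iota ltnSn.
by rewrite mem_all_words size_winv size_w.
Qed.

Lemma Sset_winv k w :
  reduced w -> Sset k (winv w) w = [seq u <- Psi k | take 1 u == take 1 (winv w)].
Proof. by move=> red_w; rewrite /Sset gmul_winv. Qed.

(* When [gamma psi <> 1], the words beginning with the inverse of the first
   letter of [gamma psi] cannot have [gamma psi] as a prefix. *)
Lemma Sset_size k g s : (g, s) \in relations k.+1 -> 3 ^ k <= size (Sset k.+1 g s).
Proof.
rewrite mem_filter => /andP [/andP [g_neq1 _] _].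
rewrite /Sset; case: eqP => [_|]; rewrite size_filter.
  by case: g g_neq1 => // a g _; rewrite /= take0 count_Psi_head.
case: (gmul g s) => // c r _.
rewrite -(count_Psi_head k (inv_letter c)).
apply: sub_count => -[//|b w]; rewrite /= take0 => /eqP [->] /=.
by apply/negP => /andP [/eqP]; case: c => ? [] [].
Qed.

End Words.

Lemma big_Rplus_const {T : Type} (l : seq T) (P : pred T) c :
  \big[Rplus/0]_(i <- l | P i) c = INR (count P l) * c.
Proof.
rewrite big_const_seq; elim: (count P l) => [|n IH]; first by rewrite /=; ring.
by rewrite iterS IH S_INR; ring.
Qed.

Lemma big_Rplus_scale {T : Type} (l : seq T) (F : T -> R) c :
  \big[Rplus/0]_(i <- l) (c * F i) = c * \big[Rplus/0]_(i <- l) F i.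
Proof. by rewrite (big_morph (Rmult c) (Rmult_plus_distr_l c) (Rmult_0_r c)). Qed.

Lemma big_Rplus_affine {T : Type} (l : seq T) (F : T -> R) u v :
  \big[Rplus/0]_(i <- l) (u + v * F i) = INR (size l) * u + v * \big[Rplus/0]_(i <- l) F i.
Proof. by rewrite big_split big_Rplus_const big_Rplus_scale count_predT. Qed.

Section RealSeq.
Context {T : eqType}.

Lemma big_Rplus_lt (l : seq T) (F G : T -> R) : l != [::] ->
  (forall i, i \in l -> G i < F i) ->
  \big[Rplus/0]_(i <- l) G i < \big[Rplus/0]_(i <- l) F i.
Proof.
elim: l => [//|a [|b l] IH] _ lt_GF; rewrite !big_cons.
  by rewrite !big_nil; have := lt_GF a (mem_head _ _); lra.
have lt_a := lt_GF a (mem_head _ _).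
have lt_bl := IH isT (fun i i_in => lt_GF i (@mem_behead _ [:: a, b & l] _ i_in)).
by move: lt_bl; rewrite !big_cons; lra.
Qed.

Lemma big_Rplus_gt0 (l : seq T) (F : T -> R) : l != [::] ->
  (forall i, 0 < F i) -> 0 < \big[Rplus/0]_(i <- l) F i.
Proof.
move=> l_neq0 F_gt0.
by have := @big_Rplus_lt l F (fun=> 0) l_neq0 (fun i _ => F_gt0 i); rewrite big1.
Qed.

Lemma list_max_ge (f : T -> R) l t : t \in l -> f t <= list_max (map f l).
Proof.
case: l => [//|a l] /=; elim: l t => [|b l IH] t /=.
  by rewrite inE => /eqP ->; lra.
rewrite !inE => /or3P [/eqP ->|/eqP ->|t_in].
- by apply: Rle_trans (Rmax_r _ _); apply: IH; rewrite inE eqxx.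
- exact: Rmax_l.
- by apply: Rle_trans (Rmax_r _ _); apply: IH; rewrite inE t_in orbT.
Qed.

Lemma list_max_le (f : T -> R) l c : 0 <= c ->
  (forall t, t \in l -> f t <= c) -> list_max (map f l) <= c.
Proof.
case: l => [//|a l] /= c_ge0 le_c.
have : f a <= c by apply: le_c; rewrite mem_head.
elim: l le_c => [//|b l IH] le_c fa_le /=.
apply: Rmax_lub; first by apply: le_c; rewrite !inE eqxx orbT.
apply: IH => // t t_in; apply: le_c; rewrite !inE in t_in *.
by case/orP: t_in => ->; rewrite ?orbT.
Qed.

End RealSeq.

Lemma INR_expn3_ge1 k : 1 <= INR (3 ^ k).
Proof. by apply: (le_INR 1); apply/leP; rewrite expn_gt0. Qed.

(* The level curve [sigma a * sigma y = 12 N - 3] is the graph of the convex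
   function [y = (1 - a) / (1 + (12 N - 4) a)]; the bound is its tangent at
   [(1/4, 1/(4 N))], i.e. at the barycentre. *)
Lemma sigma_prod_lt_tangent N a y : 1 <= N -> 0 < a -> 0 < y ->
  Defs.sigma a * Defs.sigma y < 12 * N - 3 ->
  1 / (4 * N) - (12 * N - 3) / (9 * N * N) * (a - 1 / 4) < y.
Proof.
move=> N_ge1 a_gt0 y_gt0; rewrite /Defs.sigma => lt_c.
have lt_cross : 1 - a < y * (1 + (12 * N - 4) * a).
  have : (1 - a) / a * ((1 - y) / y) * (a * y) < (12 * N - 3) * (a * y).
    by apply: Rmult_lt_compat_r => //; nra.
  have -> : (1 - a) / a * ((1 - y) / y) * (a * y) = (1 - a) * (1 - y) by field; lra.
  nra.
have sq_ge0 : 0 <= (12 * N - 3) * (3 * N - 1) * ((4 * a - 1) * (4 * a - 1)).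
  by apply: Rmult_le_pos; [nra | apply: Rle_0_sqr].
apply: (Rmult_lt_reg_r (36 * N * N * (1 + (12 * N - 4) * a))); first nra.
have -> : (1 / (4 * N) - (12 * N - 3) / (9 * N * N) * (a - 1 / 4)) *
    (36 * N * N * (1 + (12 * N - 4) * a)) =
  36 * N * N * (1 - a) - (12 * N - 3) * (3 * N - 1) * ((4 * a - 1) * (4 * a - 1)).
  by field; lra.
have : 36 * N * N * (1 - a) < 36 * N * N * (y * (1 + (12 * N - 4) * a)).
  by apply: Rmult_lt_compat_l; nra.
lra.
Qed.

Lemma sigma_barycentre_le N s : 1 <= N -> N <= s ->
  Defs.sigma (s * (1 / (4 * N))) * Defs.sigma (1 / (4 * N)) <= 12 * N - 3.
Proof.
move=> N_ge1 N_le_s; rewrite /Defs.sigma.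
have -> : (1 - 1 / (4 * N)) / (1 / (4 * N)) = 4 * N - 1 by field; lra.
have -> : (1 - s * (1 / (4 * N))) / (s * (1 / (4 * N))) = 4 * N / s - 1 by field; lra.
have : 4 * N / s <= 4.
  apply: (Rmult_le_reg_r s); first lra.
  by rewrite /Rdiv Rmult_assoc Rinv_l; lra.
nra.
Qed.

Lemma big_Sset_winv k (F : word -> R) :
  \big[Rplus/0]_(ps <- Psi k.+1) \big[Rplus/0]_(w <- Sset k.+1 (winv ps) ps) F w =
  INR (3 ^ k) * \big[Rplus/0]_(w <- Psi k.+1) F w.
Proof.
rewrite (eq_big_seq (fun ps =>
  \big[Rplus/0]_(w <- Psi k.+1 | take 1 w == take 1 (winv ps)) F w)); last first.
  by move=> ps; rewrite mem_Psi => /andP [red_ps _]; rewrite Sset_winv // big_filter.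
rewrite (exchange_big_dep xpredT) //= -big_Rplus_scale.
apply: eq_big_seq => -[|b w]; first by rewrite mem_Psi andbF.
move=> _; rewrite big_Rplus_const /= take0 -(count_Psi_winv_head k b).
by congr (INR _ * _); apply: eq_count => ps; rewrite eq_sym.
Qed.

Section LowerBound.
Variables (k : nat) (p : word -> 'I_(4 * 3 ^ k)).
Hypothesis p_inj : {in Psi k.+1 &, injective p}.
Hypothesis p_surj : forall i, exists2 w, w \in Psi k.+1 & p w = i.

Lemma big_Psi_reindex (x : 'I_(4 * 3 ^ k) -> R) :
  \big[Rplus/0]_(w <- Psi k.+1) x (p w) = \big[Rplus/0]_(i < 4 * 3 ^ k) x i.
Proof.
rewrite -(big_map p xpredT x); apply: perm_big; apply: uniq_perm.
- by rewrite (map_inj_in_uniq p_inj) uniq_Psi.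
- exact: index_enum_uniq.
- by move=> i; rewrite mem_index_enum; have [w w_in <-] := p_surj i; exact: map_f.
Qed.

Lemma Gk_ge x : in_simplex x -> 12 * INR (3 ^ k) - 3 <= Gk k.+1 p x.
Proof.
move=> [x_gt0 x_sum]; have N_ge1 := INR_expn3_ge1 k.
set N := INR (3 ^ k) in N_ge1 *.
have sum1 : \big[Rplus/0]_(w <- Psi k.+1) x (p w) = 1 by rewrite big_Psi_reindex.
have Psi_neq0 : Psi k.+1 != [::] by rewrite -size_eq0 size_Psi muln_eq0 expn_eq0.
apply: Rnot_lt_le => Gk_lt.
pose a ps := \big[Rplus/0]_(w <- Sset k.+1 (winv ps) ps) x (p w).
pose u := 1 / (4 * N) + (12 * N - 3) / (36 * N * N).
pose v := - ((12 * N - 3) / (9 * N * N)).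
have above ps : ps \in Psi k.+1 -> u + v * a ps < x (p ps).
  move=> ps_in; have rel_ps := winv_relation k.+1 ps isT ps_in.
  have -> : u + v * a ps = 1 / (4 * N) - (12 * N - 3) / (9 * N * N) * (a ps - 1 / 4).
    by rewrite /u /v; field; lra.
  apply: sigma_prod_lt_tangent => //.
    apply: big_Rplus_gt0 => //; rewrite -size_eq0 -lt0n.
    by apply: leq_trans (Sset_size k (winv ps) ps rel_ps); rewrite expn_gt0.
  by apply: Rle_lt_trans Gk_lt; exact: (list_max_ge _ _ _ rel_ps).
have := big_Rplus_lt _ _ _ Psi_neq0 above.
rewrite big_Rplus_affine size_Psi big_Sset_winv sum1 mult_INR [INR 4]/=.
have -> : (1 + 1 + 1 + 1) * N * u + v * (N * 1) = 1 by rewrite /u /v; field; lra.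
lra.
Qed.

End LowerBound.

Lemma barycentre_in_simplex k :
  in_simplex (fun _ : 'I_(4 * 3 ^ k) => 1 / (4 * INR (3 ^ k))).
Proof.
have N_ge1 := INR_expn3_ge1 k.
split=> [i|]; first by apply: Rdiv_lt_0_compat; lra.
rewrite -(big_mkord xpredT (fun=> 1 / (4 * INR (3 ^ k)))).
rewrite big_Rplus_const count_predT size_iota subn0 mult_INR /=; field; lra.
Qed.

Lemma Gk_barycentre_le k (p : word -> 'I_(4 * 3 ^ k)) :
  Gk k.+1 p (fun=> 1 / (4 * INR (3 ^ k))) <= 12 * INR (3 ^ k) - 3.
Proof.
have N_ge1 := INR_expn3_ge1 k.
apply: list_max_le => [|[g s] rel_gs]; first lra.
rewrite /hfun big_Rplus_const count_predT.
apply: sigma_barycentre_le => //; apply: le_INR; apply/leP.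
exact: Sset_size rel_gs.
Qed.

Theorem mainTheorem12 (k : nat) (hk : (2 <= k)%N)
  (p : word -> 'I_(4 * 3 ^ k.-1))
  (p_inj : {in Psi k &, injective p})
  (p_surj : forall i : 'I_(4 * 3 ^ k.-1), exists2 w, w \in Psi k & p w = i) :
  is_inf (fun y => exists x : 'I_(4 * 3 ^ k.-1) -> R,
                     in_simplex x /\ y = Gk k p x)
         (Rminus (INR (12 * 3 ^ k.-1)) (INR 3)).
Proof.
case: k hk p p_inj p_surj => [//|k] _ p p_inj p_surj; rewrite [k.+1.-1]/=.
have -> : INR (12 * 3 ^ k) - INR 3 = 12 * INR (3 ^ k) - 3 by rewrite mult_INR /=; ring.
split=> [_ [x [x_in ->]]|m lb]; first exact: Gk_ge.
have lb_barycentre := lb _ (ex_intro _ _ (conj (barycentre_in_simplex k) erefl)).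
exact: Rle_trans lb_barycentre (Gk_barycentre_le k p).
Qed.
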